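(* Let $G=(\Gamma,s)$ be a connected rooted graph. If $s$ is not a cut vertex of $G$ (i.e. the graph obtained by deleting $s$ and its incident edges is connected), then the constant function $\mathbf 1:\tilde V\to\mathbb{N}$, $v\mapsto 1$, belongs to $\mathrm{PPF}(G)$. If $s$ is a cut vertex of $G$, then $\mathrm{PPF}(G)=\emptyset$.
   Context: $\mathbb{N}=\{1,2,\dots\}$. A rooted graph $G=(\Gamma,s)$ is a finite undirected multigraph without loops with a distinguished vertex $s$ (the sink); $V$ is its vertex set and $\tilde V=V\setminus\{s\}$. $\mathrm{mult}(vw)$ is the number of edges between $v,w$; for $A\subseteq V$, $\deg^A(v)=\sum_{w\in A}\mathrm{mult}(vw)$ and $\deg(v)=\deg^V(v)$. A $G$-parking function is a function $p:\tilde V\to\mathbb{N}$ such that for every nonempty $S\subseteq\tilde V$ there exists $v\in S$ with $p(v)\le\deg^{V\setminus S}(v)$; $\mathrm{PF}(G)$ is their set. For $A\subseteq\tilde V$, $G^A$ denotes the induced subgraph of $G$ on $A\cup\{s\}$, rooted at $s$ (possibly disconnected; the definition of $G^A$-parking function is the same). For an ordered pair $(A,B)$ of nonempty disjoint sets with $A\cup B=\tilde V$ and $p\in\mathrm{PF}(G)$, define $p^A:A\to\mathbb{N}$, $p^A(v)=p(v)$, and $p^B:B\to\mathbb{Z}$, $p^B(v)=p(v)-\deg^A(v)$. $p$ is decomposable with respect to $(A,B)$ if $p^A\in\mathrm{PF}(G^A)$ and $p^B\in\mathrm{PF}(G^B)$. $p\in\mathrm{PF}(G)$ is prime if there is no such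 $(A,B)$ with respect to which $p$ is decomposable; $\mathrm{PPF}(G)$ is the set of prime $G$-parking functions. *)

From HB Require Import structures.
From mathcomp Require Import all_boot all_order all_algebra.
Set Implicit Arguments. Unset Strict Implicit. Unset Printing Implicit Defensive.
Import Order.TTheory GRing.Theory Num.Theory.
Local Open Scope ring_scope.

(* A finite loopless multigraph on the finite vertex type V is given by a
   multiplicity function mult : V -> V -> nat which is symmetric and has
   zero diagonal. *)
Definition is_multigraph (V : finType) (mult : V -> V -> nat) : Prop :=
  (forall v w, mult v w = mult w v) /\ (forall v, mult v v = 0%N).

Definition deg_to (V : finType) (mult : V -> V -> nat) (X : {set V}) (v : V) : nat :=
  (\sum_(w in X) mult v w)%N.

Definition adj (V : finType) (mult : V -> V -> nat) : rel V :=
  fun x y => (0 < mult x y)%N.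

Definition connected_graph (V : finType) (mult : V -> V -> nat) : Prop :=
  forall u v : V, connect (adj mult) u v.

Definition connected_without (V : finType) (mult : V -> V -> nat) (s : V) : Prop :=
  forall u v : V, u != s -> v != s ->
    connect (fun x y => [&& x != s, y != s & adj mult x y]) u v.

(* p is a parking function of the induced rooted graph G^A (vertex set
   A ∪ {s}, sink s), where A ⊆ V \ {s}.  Only the values of p on A matter.
   Values are taken in int so that p^B (which is Z-valued a priori) fits;
   membership in PF requires values in N = {1,2,...}. *)
Definition is_PF (V : finType) (mult : V -> V -> nat) (s : V)
    (A : {set V}) (p : V -> int) : Prop :=
  (forall v, v \in A -> 1 <= p v) /\
  (forall S : {set V}, S \subset A -> S != set0 ->
     exists2 v, v \in S & p v <= (deg_to mult ((s |: A) :\: S) v)%:Z).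

Definition Vt (V : finType) (s : V) : {set V} := ~: [set s].

Definition decomposable (V : finType) (mult : V -> V -> nat) (s : V)
    (p : V -> int) (A B : {set V}) : Prop :=
  [/\ A != set0, B != set0, [disjoint A & B] && (A :|: B == Vt s),
      is_PF mult s A p &
      is_PF mult s B (fun v => p v - (deg_to mult A v)%:Z)].

Definition is_PPF (V : finType) (mult : V -> V -> nat) (s : V) (p : V -> int) : Prop :=
  is_PF mult s (Vt s) p /\
  ~ (exists A B : {set V}, decomposable mult s p A B).

From mathcomp Require Import all_boot all_order all_algebra.
From mathcomp Require Import zify.
Set Implicit Arguments. Unset Strict Implicit. Unset Printing Implicit Defensive.
Import Order.TTheory GRing.Theory Num.Theory.
Local Open Scope ring_scope.

(* If s is not a cut vertex, every decomposition (A, B) of a parking function p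
   has an edge x y with x in B and y in A, so p^B(x) = p(x) - deg^A(x) <= p(x) - 1;
   for p = 1 this contradicts p^B(x) >= 1, while 1 is a parking function because
   every nonempty S avoiding s has an edge leaving it on a path to s.
   If s is a cut vertex, a connected component A of G - s and its complement B
   share no edge, so deg^A vanishes on B and every parking function splits along
   (A, B): prime parking functions cannot exist. *)

Lemma connect_exit (T : finType) (r : rel T) (S : {set T}) x y :
  connect r x y -> x \in S -> y \notin S ->
  exists a b, [/\ a \in S, b \notin S & r a b].
Proof.
move/connectP=> [p rp ->]; elim: p x rp => [|z p IHp] x /=.
  by move=> _ xS yS; rewrite xS in yS.
move/andP=> [rxz rp] xS lS.
case zS: (z \in S); first exact: IHp rp zS lS.
by exists x, z; rewrite zS.
Qed.

Section Degrees.

Variables (V : finType) (mult : V -> V -> nat).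

Lemma deg_to_ge (X : {set V}) v w : w \in X -> (mult v w <= deg_to mult X v)%N.
Proof. by move=> wX; rewrite /deg_to (bigD1 w) //= leq_addr. Qed.

Lemma eq_deg_to (X Y : {set V}) v :
  (forall w, (w \in X) != (w \in Y) -> mult v w = 0%N) ->
  deg_to mult X v = deg_to mult Y v.
Proof.
move=> XY; rewrite /deg_to [LHS]big_mkcond [RHS]big_mkcond; apply: eq_bigr => w _.
by case wX: (w \in X); case wY: (w \in Y); rewrite // XY ?wX ?wY.
Qed.

Lemma deg_to_eq0 (X : {set V}) v :
  (forall w, w \in X -> mult v w = 0%N) -> deg_to mult X v = 0%N.
Proof. by move=> X0; apply: big1. Qed.

End Degrees.

Lemma in_Vt (V : finType) (s w : V) : (w \in Vt s) = (w != s).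
Proof. by rewrite !inE. Qed.

Section ParkingFunctions.

Variables (V : finType) (mult : V -> V -> nat) (s : V).

Definition separated (A B : {set V}) : Prop :=
  forall x y, x \in A -> y \in B -> mult x y = 0%N.

Lemma eq_is_PF (A : {set V}) (p q : V -> int) :
  {in A, p =1 q} -> is_PF mult s A p -> is_PF mult s A q.
Proof.
move=> pq [p_ge1 p_park]; split=> [v vA|S SA S0]; first by rewrite -pq ?p_ge1.
have [v vS pv] := p_park S SA S0.
by exists v; rewrite // -pq //; apply: (subsetP SA).
Qed.

Lemma is_PF_restrict (A : {set V}) (p : V -> int) :
  A \subset Vt s -> separated A (Vt s :\: A) ->
  is_PF mult s (Vt s) p -> is_PF mult s A p.
Proof.
move=> AV sepA [p_ge1 p_park]; split=> [v vA|S SA S0].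
  exact/p_ge1/(subsetP AV).
have [v vS pv] := p_park S (subset_trans SA AV) S0.
exists v => //; rewrite -(@eq_deg_to _ _ ((s |: Vt s) :\: S)) // => w.
have vA := subsetP SA v vS.
have [->|ws] := eqVneq w s; first by rewrite !inE eqxx /= eqxx.
case wS: (w \in S); first by rewrite !inE wS.
case wA: (w \in A); first by rewrite !inE wS wA ws eqxx.
by move=> _; apply: sepA; rewrite // !inE wA ws.
Qed.

Lemma is_PF_one : connected_graph mult -> is_PF mult s (Vt s) (fun _ => 1).
Proof.
move=> conn; split=> // S SV S0.
have [x xS] := set0Pn S S0.
have sS : s \notin S by apply/negP => /(subsetP SV); rewrite in_Vt eqxx.
have [a [b [aS bS ab]]] := connect_exit (conn x s) xS sS.
exists a => //.
have bSc : b \in (s |: Vt s) :\: S by rewrite !inE bS orbN.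
by have := deg_to_ge mult a bSc; move: ab; rewrite /adj; lia.
Qed.

Lemma decomposable_deg_lt (p : V -> int) (A B : {set V}) x :
  decomposable mult s p A B -> x \in B -> (deg_to mult A x)%:Z < p x.
Proof. by move=> [_ _ _ _ [pB_ge1 _]] xB; have := pB_ge1 x xB; lia. Qed.

Lemma decomposable_separated (p : V -> int) (A : {set V}) :
  is_multigraph mult -> A \subset Vt s ->
  A != set0 -> Vt s :\: A != set0 -> separated A (Vt s :\: A) ->
  is_PF mult s (Vt s) p -> decomposable mult s p A (Vt s :\: A).
Proof.
move=> [msym _] AV A0 B0 sepA pPF.
have sepB : separated (Vt s :\: A) A by move=> x y xB yA; rewrite msym sepA.
split=> //.
- by rewrite disjoints_subset setCD subsetUr /= setDE setUIr setUCr setIT (setUidPr AV).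
- exact: is_PF_restrict.
apply: (@eq_is_PF _ p) => [x xB|].
  by rewrite deg_to_eq0 ?subr0 // => w; apply: sepB.
apply: is_PF_restrict pPF; first exact: subsetDl.
by move=> x y xB; rewrite setDDr setDv set0U => /setIP[_]; apply: sepB.
Qed.

End ParkingFunctions.

Section CutVertex.

Variables (V : finType) (mult : V -> V -> nat) (s : V).

Let adj_del (x y : V) := [&& x != s, y != s & adj mult x y].

Lemma cut_vertex_split : ~ connected_without mult s ->
  exists A : {set V}, [/\ A != set0, Vt s :\: A != set0, A \subset Vt s &
    separated mult A (Vt s :\: A)].
Proof.
move=> not_conn.
have [u [v [us vs nuv]]] : exists u v, [/\ u != s, v != s & ~~ connect adj_del u v].
  case: (boolP [exists u, exists v, [&& u != s, v != s & ~~ connect adj_del u v]]).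
    by move=> /existsP[u /existsP[v /and3P[? ? ?]]]; exists u, v.
  move=> none; case: not_conn => u v us vs; apply: contraNT none => nuv.
  by apply/existsP; exists u; apply/existsP; exists v; rewrite us vs nuv.
pose A := [set x | (x != s) && connect adj_del u x].
exists A; split.
- by apply/set0Pn; exists u; rewrite inE us connect0.
- by apply/set0Pn; exists v; rewrite !inE vs /= andbT.
- by apply/subsetP => x; rewrite !inE => /andP[].
move=> x y; rewrite !inE => /andP[xs ux] /andP[yNA ys].
apply/eqP; rewrite -leqn0 leqNgt; apply: contra yNA => xy.
by rewrite ys (connect_trans ux) // connect1 // /adj_del xs ys.
Qed.

End CutVertex.

Theorem proposition2p3 (V : finType) (mult : V -> V -> nat) (s : V) :
  is_multigraph mult -> connected_graph mult ->
  (connected_without mult s -> is_PPF mult s (fun _ => 1)) /\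
  (~ connected_without mult s -> forall p : V -> int, ~ is_PPF mult s p).
Proof.
move=> Gmult Gconn; split=> [conn_del | cut p [pPF indecomp]].
  split; first exact: is_PF_one.
  move=> [A [B dec]]; have [A0 B0 /andP[dAB /eqP AB] _ _] := dec.
  have [a aA] := set0Pn A A0; have [b bB] := set0Pn B B0.
  have aV : a != s by rewrite -in_Vt -AB inE aA.
  have bV : b != s by rewrite -in_Vt -AB inE bB orbT.
  have [x [y [xB yB /and3P[_ ys xy]]]] :=
    connect_exit (conn_del _ _ bV aV) bB (negbT (disjointFr dAB aA)).
  have yA : y \in A by move: ys; rewrite -in_Vt -AB inE (negbTE yB) orbF.
  have := decomposable_deg_lt dec xB; have := deg_to_ge mult x yA.
  by move: xy; rewrite /adj; lia.
have [A [A0 B0 AV sepA]] := cut_vertex_split cut.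
by apply: indecomp; exists A, (Vt s :\: A); apply: decomposable_separated.
Qed.
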